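(* For $\epsilon>0$ and $\rho\ge0$ let $\mathbf G_{\epsilon\rho}(s):=\mathbf C(sI-\mathbf A_{\epsilon\rho})^{-1}\mathbf B$. Then for every fixed $s\in\mathbb C\setminus\{-m_\rho,-\mu_\rho\}$, $\lim_{\epsilon\to0}\mathbf G_{\epsilon\rho}(s)=\mathbf H_\rho(s)$, where $$\mathbf H_\rho(s):=\begin{bmatrix}\bar\Pi_{1u}&0\\\Pi_{2u}&\mu I\end{bmatrix}\begin{bmatrix}g_{m\rho}(s)I&0\\0&g_{\mu\rho}(s)I\end{bmatrix}\begin{bmatrix}-\bar\Pi_{1u}^\top&-\frac1\mu\Pi_{2u}^\top\\0&I\end{bmatrix},$$ with $g_{m\rho}(s):=(s+m_\rho)^{-1}$ and $g_{\mu\rho}(s):=(s+\mu_\rho)^{-1}$.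
   Context: Let $A\in\mathbb R^{n\times n}$ be Hurwitz, $B\in\mathbb R^{n\times p}$, and for $i=1,2$ let $C_i\in\mathbb R^{r_i\times n}$. Let $\Pi_{iu}:=-C_iA^{-1}B$ and $\bar\Pi_{1u}:=\begin{bmatrix}I\\\Pi_{1u}\end{bmatrix}$. Let $m>0$, $\mu>0$, $\rho\ge0$, $m_\rho:=m-\rho$ and $\mu_\rho:=\mu-\rho$. Define $$\mathbf A_\epsilon:=\begin{bmatrix}\frac1\epsilon A&\frac1\epsilon B&0\\0&-mI&0\\0&0&-\mu I\end{bmatrix},\qquad \mathbf A_{\epsilon\rho}:=\mathbf A_\epsilon+\rho I,$$ $$\mathbf B=\begin{bmatrix}0&0&0\\-I&-\Pi_{1u}^\top&-\frac1\mu\Pi_{2u}^\top\\0&0&I\end{bmatrix},\qquad \mathbf C=\begin{bmatrix}0&I&0\\C_1&0&0\\C_2&0&\mu I\end{bmatrix},$$ where the diagonal blocks of $\mathbf A_\epsilon$ have sizes $n,p,r_2$, and the identity blocks of $\mathbf B$ and $\mathbf C$ have compatible sizes. *)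

From HB Require Import structures.
From mathcomp Require Import all_boot all_order all_algebra.
From mathcomp Require Import all_classical all_reals all_analysis.
From mathcomp Require Import complex.
Set Implicit Arguments. Unset Strict Implicit. Unset Printing Implicit Defensive.
Import Order.TTheory GRing.Theory Num.Theory.
Local Open Scope ring_scope.
Local Open Scope complex_scope.
Import numFieldTopology.Exports numFieldNormedType.Exports.

(* Equip R[i] with its standard normed (hence topological) structure: the
   norm |z| of the numClosedField R[i], regarded as a normed module over
   itself.  Matrices over R[i] then carry the induced (entrywise/product)
   topology from MathComp-Analysis. *)
HB.instance Definition _ (R : realType) := NormedModule.copy R[i] (R[i])^o.

Section Defs.
Variable R : realType.
Local Notation C := (R[i]).

Definition cmx m k (M : 'M[R]_(m, k)) : 'M[C]_(m, k) := map_mx (fun x => x%:C) M.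

Definition hurwitz n (A : 'M[R]_n) : Prop :=
  forall l : C, eigenvalue (cmx A) l -> Re l < 0.

Variables (n p r1 r2 : nat) (A : 'M[R]_n) (B : 'M[R]_(n, p))
  (C1 : 'M[R]_(r1, n)) (C2 : 'M[R]_(r2, n)) (m mu : R).

Definition Pi_u r (Ci : 'M[R]_(r, n)) : 'M[R]_(r, p) := - (Ci *m invmx A *m B).
Definition Pi1u := Pi_u C1.
Definition Pi2u := Pi_u C2.
Definition Pibar1u : 'M[R]_(p + r1, p) := col_mx 1%:M Pi1u.

Definition Aeps (eps : R) : 'M[R]_((n + p) + r2) :=
  block_mx (block_mx (eps^-1 *: A) (eps^-1 *: B) 0 (- m%:M)) 0 0 (- mu%:M).
Definition Aepsrho (eps rho : R) : 'M[R]_((n + p) + r2) := Aeps eps + rho%:M.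

Definition Bm : 'M[R]_((n + p) + r2, (p + r1) + r2) :=
  block_mx (col_mx 0 (row_mx (- 1%:M) (- Pi1u^T)))
           (col_mx 0 (- (mu^-1 *: Pi2u^T)))
           0 1%:M.

Definition Cm : 'M[R]_((p + r1) + r2, (n + p) + r2) :=
  block_mx (col_mx (row_mx 0 1%:M) (row_mx C1 0)) 0
           (row_mx C2 0) (mu%:M).

Definition Gepsrho (eps rho : R) (s : C) : 'M[C]_((p + r1) + r2) :=
  cmx Cm *m invmx (s%:M - cmx (Aepsrho eps rho)) *m cmx Bm.

Definition g_ (a rho : R) (s : C) : C := (s + (a - rho)%:C)^-1.

Definition Hrho (rho : R) (s : C) : 'M[C]_((p + r1) + r2) :=
  block_mx (cmx Pibar1u) 0 (cmx Pi2u) ((mu%:C)%:M)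
  *m block_mx ((g_ m rho s)%:M) 0 0 ((g_ mu rho s)%:M)
  *m block_mx (- cmx Pibar1u^T) (- ((mu^-1)%:C *: cmx Pi2u^T)) 0 1%:M.

End Defs.

(* Write t := s - rho.  The matrix sI - A_{eps rho} is block upper triangular
   with diagonal blocks t I - A/eps, (t + m) I and (t + mu) I, so its inverse is
   explicit: the fast block contributes eps (eps t I - A)^{-1}, and the coupling
   block (eps t I - A)^{-1} B g_m.  Since A is Hurwitz, hence invertible, these
   tend to 0 and -A^{-1} B g_m as eps -> 0 (matrix inversion is continuous at
   invertible matrices).  The limit resolvent factors through the slow
   coordinates (u, z) as J diag(g_m, g_mu) K, where J appends to u the
   quasi-steady state -A^{-1} B u of the fast state x; multiplying by C and B
   turns J and K into the outer factors of H_rho. *)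

From HB Require Import structures.
From mathcomp Require Import all_boot all_order all_algebra.
From mathcomp Require Import all_classical all_reals all_analysis.
From mathcomp Require Import complex.
Import Order.TTheory GRing.Theory Num.Theory.
Import numFieldTopology.Exports numFieldNormedType.Exports.
Local Open Scope ring_scope.
Local Open Scope complex_scope.
Local Open Scope classical_set_scope.

Set Implicit Arguments.
Unset Strict Implicit.
Unset Printing Implicit Defensive.

Section MatrixLimits.
Context {K : numFieldType} {T : Type} (F : set_system T) {FF : Filter F}.

Lemma cvg_mxP a b (f : T -> 'M[K]_(a, b)) (M : 'M[K]_(a, b)) :
  f @ F --> M <-> forall i j, f x i j @[x --> F] --> M i j.
Proof.
split=> [fM i j | fM].
  exact: (cvg_comp _ _ fM (@coord_continuous K a b i j M)).
apply/cvg_mx_entourageP => E entE.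
change (\forall x \near F, forall i j, (M i j, f x i j) \in E).
apply: filter_forall => i; apply: filter_forall => j.
have fE := proj1 (@cvg_entourageP _ _ (fmap_filter _ FF) _) (fM i j) E entE.
by near=> x; rewrite inE; near: x.
Unshelve. all: by end_near.
Qed.

Lemma cvg_scalar_mx a (k : T -> K) (l : K) :
  k @ F --> l -> (k x)%:M @[x --> F] --> (l%:M : 'M[K]_a).
Proof.
move=> kl; apply/cvg_mxP => i j; rewrite mxE.
under eq_cvg do rewrite mxE.
exact: cvgMn.
Qed.

Lemma cvg_mulmx a b c (f : T -> 'M[K]_(a, b)) (g : T -> 'M[K]_(b, c))
    (M : 'M[K]_(a, b)) (N : 'M[K]_(b, c)) :
  f @ F --> M -> g @ F --> N -> f x *m g x @[x --> F] --> M *m N.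
Proof.
move=> /cvg_mxP fM /cvg_mxP gN; apply/cvg_mxP => i j; rewrite mxE.
under eq_cvg do rewrite mxE.
by apply: (cvg_big add_continuous) => k _; apply: cvgM.
Qed.

Lemma cvg_row_mx a b1 b2 (f : T -> 'M[K]_(a, b1)) (g : T -> 'M[K]_(a, b2))
    (M : 'M[K]_(a, b1)) (N : 'M[K]_(a, b2)) :
  f @ F --> M -> g @ F --> N -> row_mx (f x) (g x) @[x --> F] --> row_mx M N.
Proof.
move=> /cvg_mxP fM /cvg_mxP gN; apply/cvg_mxP => i j.
rewrite -(splitK j); case: (fintype.split j) => k /=.
  by rewrite row_mxEl; under eq_cvg do rewrite row_mxEl; exact: fM.
by rewrite row_mxEr; under eq_cvg do rewrite row_mxEr; exact: gN.
Qed.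

Lemma cvg_col_mx a1 a2 b (f : T -> 'M[K]_(a1, b)) (g : T -> 'M[K]_(a2, b))
    (M : 'M[K]_(a1, b)) (N : 'M[K]_(a2, b)) :
  f @ F --> M -> g @ F --> N -> col_mx (f x) (g x) @[x --> F] --> col_mx M N.
Proof.
move=> /cvg_mxP fM /cvg_mxP gN; apply/cvg_mxP => i j.
rewrite -(splitK i); case: (fintype.split i) => k /=.
  by rewrite col_mxEu; under eq_cvg do rewrite col_mxEu; exact: fM.
by rewrite col_mxEd; under eq_cvg do rewrite col_mxEd; exact: gN.
Qed.

Lemma cvg_block_mx a1 a2 b1 b2
    (f1 : T -> 'M[K]_(a1, b1)) (f2 : T -> 'M[K]_(a1, b2))
    (f3 : T -> 'M[K]_(a2, b1)) (f4 : T -> 'M[K]_(a2, b2))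
    (M1 : 'M[K]_(a1, b1)) (M2 : 'M[K]_(a1, b2))
    (M3 : 'M[K]_(a2, b1)) (M4 : 'M[K]_(a2, b2)) :
  f1 @ F --> M1 -> f2 @ F --> M2 -> f3 @ F --> M3 -> f4 @ F --> M4 ->
  block_mx (f1 x) (f2 x) (f3 x) (f4 x) @[x --> F] --> block_mx M1 M2 M3 M4.
Proof. by move=> ? ? ? ?; apply: cvg_col_mx; apply: cvg_row_mx. Qed.

Lemma cvg_det a (f : T -> 'M[K]_a) (M : 'M[K]_a) :
  f @ F --> M -> \det (f x) @[x --> F] --> \det M.
Proof.
move=> /cvg_mxP fM; apply: (cvg_big add_continuous) => s _.
by apply: cvgM; [exact: cvg_cst | apply: (cvg_big mul_continuous)].
Qed.

Lemma cvg_adj a (f : T -> 'M[K]_a) (M : 'M[K]_a) :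
  f @ F --> M -> \adj (f x) @[x --> F] --> \adj M.
Proof.
move=> /cvg_mxP fM; apply/cvg_mxP => i j; rewrite mxE.
under eq_cvg do rewrite mxE.
apply: cvgM; first exact: cvg_cst.
apply: cvg_det; apply/cvg_mxP => k l; rewrite !mxE.
by under eq_cvg do rewrite !mxE; exact: fM.
Qed.

Lemma cvg_unitmx a (f : T -> 'M[K]_a) (M : 'M[K]_a) :
  f @ F --> M -> M \in unitmx -> \forall x \near F, f x \in unitmx.
Proof.
move=> /cvg_det fM; rewrite unitmxE unitfE => /(cvgr_neq0 _ fM) fM0.
by near=> x; rewrite unitmxE unitfE; near: x.
Unshelve. all: by end_near.
Qed.

Lemma cvg_invmx a (f : T -> 'M[K]_a) (M : 'M[K]_a) :
  f @ F --> M -> M \in unitmx -> invmx (f x) @[x --> F] --> invmx M.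
Proof.
move=> fM uM; have uf := cvg_unitmx fM uM.
have detM0 : \det M != 0 by rewrite -unitfE -unitmxE.
apply: cvg_trans (near_eq_cvg _) _ => [|/=].
  by apply: filterS uf => x ufx; rewrite /invmx ufx.
rewrite /invmx uM; apply: cvgZ; last exact: cvg_adj.
exact: cvgV (cvg_det fM).
Qed.

End MatrixLimits.

Lemma invmxN (K : comUnitRingType) a (M : 'M[K]_a) : invmx (- M) = - invmx M.
Proof.
have [uM | nuM] := boolP (M \in unitmx).
  by rewrite -scaleN1r invmxZ ?unitmxZ ?unitrN1 // invrN1 scaleN1r.
by rewrite !invmx_out // inE -scaleN1r unitmxZ ?unitrN1.
Qed.

Lemma unitmx_ublock (K : comUnitRingType) a1 a2 (Aul : 'M[K]_a1)
    (Aur : 'M[K]_(a1, a2)) (Adr : 'M[K]_a2) :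
  (block_mx Aul Aur 0 Adr \in unitmx) = (Aul \in unitmx) && (Adr \in unitmx).
Proof. by rewrite !unitmxE det_ublock unitrM. Qed.

Lemma invmx_ublock (K : comUnitRingType) a1 a2 (Aul : 'M[K]_a1)
    (Aur : 'M[K]_(a1, a2)) (Adr : 'M[K]_a2) :
  Aul \in unitmx -> Adr \in unitmx ->
  invmx (block_mx Aul Aur 0 Adr) =
  block_mx (invmx Aul) (- (invmx Aul *m Aur *m invmx Adr)) 0 (invmx Adr).
Proof.
move=> uAul uAdr.
have uA : block_mx Aul Aur 0 Adr \in unitmx by rewrite unitmx_ublock uAul.
rewrite -[LHS]mul1mx; apply: (canLR (mulmxK uA)).
rewrite mulmx_block !(mulmx0, mul0mx, add0r, addr0) !mulVmx // mulNmx.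
by rewrite -!mulmxA mulVmx // mulmx1 subrr -scalar_mx_block.
Qed.

Lemma real_complex_continuous (R : realType) : continuous (fun x : R => x%:C).
Proof.
move=> x; apply/cvgrPdist_lt => e e0.
have /complex_realP [k ek] := gtr0_real e0.
move: e0; rewrite ek ltcR => k0.
near=> y; rewrite -rmorphB normc_def /= expr0n /= addr0 sqrtr_sqr ltcR.
by near: y; exact: (@cvgr_dist_lt _ R^o _ (nbhs x) _ id x cvg_id k k0).
Unshelve. all: by end_near.
Qed.

Lemma hurwitz_unitmx (R : realType) n (A : 'M[R]_n) :
  hurwitz A -> cmx A \in unitmx.
Proof.
move=> hA; rewrite unitmxE unitfE; apply/negP => /det0P [v v0 vA].
have ev : eigenvalue (cmx A) 0 by apply/eigenvalueP; exists v; rewrite ?vA ?scale0r.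
by have := hA 0 ev; rewrite ReE conjC0 addr0 mul0r ltxx.
Qed.

Section Resolvent.
Variables (R : realType) (n p r1 r2 : nat) (A : 'M[R]_n) (B : 'M[R]_(n, p))
  (C1 : 'M[R]_(r1, n)) (C2 : 'M[R]_(r2, n)) (m mu rho : R) (s : R[i]).
Local Notation C := (R[i]).
Local Notation gm := (g_ m rho s).
Local Notation gmu := (g_ mu rho s).

Definition pencil (eps : R) : 'M[C]_n := (eps%:C * (s - rho%:C))%:M - cmx A.

Definition resolvent (eps : R) : 'M[C]_((n + p) + r2) :=
  block_mx (block_mx (eps%:C *: invmx (pencil eps))
                     (gm *: (invmx (pencil eps) *m cmx B)) 0 gm%:M)
           0 0 gmu%:M.

Lemma sI_Aepsrho (eps : R) : eps != 0 ->
  s%:M - cmx (Aepsrho r2 A B m mu eps rho) =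
  block_mx (block_mx ((eps%:C)^-1 *: pencil eps) (- ((eps%:C)^-1 *: cmx B))
                     0 (s + (m - rho)%:C)%:M)
           0 0 (s + (mu - rho)%:C)%:M.
Proof.
move=> eps0; have epsC0 : eps%:C != 0 by rewrite fmorph_eq0.
have fast :
    s%:M - ((eps^-1)%:C *: cmx A + (rho%:C)%:M) = (eps%:C)^-1 *: pencil eps.
  rewrite /pencil scalerBr scale_scalar_mx mulrA mulVf // mul1r fmorphV.
  by rewrite raddfB opprD addrA addrAC.
have slow (a : R) k :
    s%:M - (- (a%:C)%:M + (rho%:C)%:M) = (s + (a - rho)%:C)%:M :> 'M[C]_k.
  by rewrite rmorphB opprD opprK -(raddfB (@scalar_mx C k)) -raddfD.
rewrite /Aepsrho /Aeps /cmx map_mxD !map_block_mx !map_mx0 !map_mxZ !map_mxN.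
rewrite !map_scalar_mx (scalar_mx_block (n + p) r2) (scalar_mx_block n p) /=.
rewrite (scalar_mx_block (n + p) r2 (rho%:C)) (scalar_mx_block n p (rho%:C)).
rewrite !add_block_mx !opp_block_mx !add_block_mx.
rewrite !(addr0, add0r, subr0, sub0r, oppr0).
by rewrite fast !slow fmorphV.
Qed.

Lemma resolventE (eps : R) : eps != 0 -> pencil eps \in unitmx ->
  s != - (m - rho)%:C -> s != - (mu - rho)%:C ->
  invmx (s%:M - cmx (Aepsrho r2 A B m mu eps rho)) = resolvent eps.
Proof.
move=> eps0 uP hm hmu; have epsC0 : eps%:C != 0 by rewrite fmorph_eq0.
have unit_shift (a : R) k :
    s != - (a - rho)%:C -> ((s + (a - rho)%:C)%:M : 'M[C]_k) \in unitmx.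
  by move=> ha; rewrite unitmxE det_scalar unitrX // unitfE addr_eq0.
have uPeps : (eps%:C)^-1 *: pencil eps \in unitmx.
  by rewrite unitmxZ ?unitfE ?invr_eq0.
rewrite sI_Aepsrho // invmx_block_diag; last first.
  by rewrite !unitmx_ublock uPeps !unit_shift.
rewrite invmx_ublock ?unit_shift // invmxZ ?invrK // !invmx_scalar.
rewrite /resolvent /g_; congr block_mx; congr block_mx.
rewrite mulmxN mulNmx opprK mul_mx_scalar -scalemxAl -scalemxAr.
by rewrite !scalerA mulfK.
Qed.

Lemma pencil0 : pencil 0 = - cmx A.
Proof. by rewrite /pencil rmorph0 mul0r (raddf0 (@scalar_mx _ n)) sub0r. Qed.

Lemma pencil0_unit : hurwitz A -> pencil 0 \in unitmx.
Proof. by move=> hA; rewrite pencil0 -scaleN1r unitmxZ ?unitrN1 ?hurwitz_unitmx. Qed.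

Lemma cvg_pencil : pencil eps @[eps --> 0] --> pencil 0.
Proof.
apply: cvgB; last exact: cvg_cst.
by apply: cvg_scalar_mx; apply: cvgM; [exact: real_complex_continuous | exact: cvg_cst].
Qed.

Lemma cvg_resolvent : hurwitz A -> resolvent eps @[eps --> 0] --> resolvent 0.
Proof.
move=> hA; have cvg_inv := cvg_invmx cvg_pencil (pencil0_unit hA).
apply: cvg_block_mx; [|exact: cvg_cst..].
apply: cvg_block_mx; [| |exact: cvg_cst..].
  by apply: cvgZ; [exact: real_complex_continuous | exact: cvg_inv].
apply: cvgZ; first exact: cvg_cst.
by apply: cvg_mulmx; [exact: cvg_inv | exact: cvg_cst].
Qed.

Definition qss_embed : 'M[C]_((n + p) + r2, p + r2) :=
  block_mx (col_mx (invmx (pencil 0) *m cmx B) 1%:M) 0 0 1%:M.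

Definition slow_proj : 'M[C]_(p + r2, (n + p) + r2) :=
  block_mx (row_mx 0 1%:M) 0 0 1%:M.

Lemma resolvent0_factor :
  resolvent 0 = qss_embed *m block_mx gm%:M 0 0 gmu%:M *m slow_proj.
Proof.
rewrite /resolvent /qss_embed /slow_proj rmorph0 scale0r !mulmx_block.
rewrite !(mulmx0, mul0mx, mulmx1, mul1mx, addr0, add0r) !mul_col_mx mul1mx.
by rewrite !mul_mx_row !mulmx0 !mulmx1 mul_mx_scalar.
Qed.

Lemma cmx_Pi_u r (Ci : 'M[R]_(r, n)) :
  cmx (Pi_u A B Ci) = cmx Ci *m (invmx (pencil 0) *m cmx B).
Proof.
rewrite pencil0 invmxN /Pi_u /cmx map_mxN !map_mxM map_invmx.
by rewrite mulNmx mulmxN mulmxA.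
Qed.

Lemma cmx_Pibar1u :
  cmx (Pibar1u A B C1) = col_mx 1%:M (cmx C1 *m (invmx (pencil 0) *m cmx B)).
Proof. by rewrite /Pibar1u /Pi1u -cmx_Pi_u /cmx map_col_mx map_mx1. Qed.

Lemma Cm_qss_embed : cmx (Cm p C1 C2 mu) *m qss_embed =
  block_mx (cmx (Pibar1u A B C1)) 0 (cmx (Pi2u A B C2)) (mu%:C)%:M.
Proof.
rewrite cmx_Pibar1u /Pi2u cmx_Pi_u /Cm /qss_embed /cmx !map_block_mx.
rewrite !map_row_mx !map_mx0 !map_mx1 map_scalar_mx !mulmx_block mul_block_col.
by rewrite !mul_row_col !(mulmx0, mul0mx, mulmx1, mul1mx, addr0, add0r).
Qed.

Lemma slow_proj_Bm : slow_proj *m cmx (Bm A B C1 C2 mu) =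
  block_mx (- cmx (Pibar1u A B C1)^T) (- ((mu^-1)%:C *: cmx (Pi2u A B C2)^T))
           0 1%:M.
Proof.
rewrite /slow_proj /Bm /Pibar1u /cmx !map_block_mx !map_col_mx !map_row_mx.
rewrite !map_mx0 !map_mxN !map_mxZ -!map_trmx !map_mx1 !mulmx_block !mul_row_col.
rewrite !(mulmx0, mul0mx, mulmx1, mul1mx, addr0, add0r).
by rewrite map_col_mx map_mx1 tr_col_mx trmx1 opp_row_mx.
Qed.

Lemma Hrho_factor : cmx (Cm p C1 C2 mu) *m resolvent 0 *m cmx (Bm A B C1 C2 mu) =
  Hrho A B C1 C2 m mu rho s.
Proof.
rewrite resolvent0_factor !mulmxA Cm_qss_embed -!mulmxA slow_proj_Bm.
by rewrite /Hrho !mulmxA.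
Qed.

Lemma Gepsrho_resolvent_near : hurwitz A ->
  s != - (m - rho)%:C -> s != - (mu - rho)%:C ->
  \forall eps \near (0 : R)^'+,
    cmx (Cm p C1 C2 mu) *m resolvent eps *m cmx (Bm A B C1 C2 mu) =
    Gepsrho A B C1 C2 m mu eps rho s.
Proof.
move=> hA hm hmu.
have pencil_unit :=
  cvg_unitmx (cvg_at_right_filter cvg_pencil) (pencil0_unit hA).
near=> eps.
have eps0 : eps != 0 by apply: lt0r_neq0; near: eps; exact: nbhs_right_gt.
by rewrite /Gepsrho resolventE //; near: eps; exact: pencil_unit.
Unshelve. all: by end_near.
Qed.

End Resolvent.

Unset Implicit Arguments.

Theorem lemma1 (R : realType) (n p r1 r2 : nat) (A : 'M[R]_n) (B : 'M[R]_(n, p))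
  (C1 : 'M[R]_(r1, n)) (C2 : 'M[R]_(r2, n)) (m mu rho : R) :
  hurwitz A -> 0 < m -> 0 < mu -> 0 <= rho ->
  forall s : R[i], s != - (m - rho)%:C -> s != - (mu - rho)%:C ->
  (fun eps : R => Gepsrho A B C1 C2 m mu eps rho s) @ (0 : R)^'+
    --> Hrho A B C1 C2 m mu rho s.
Proof.
move=> hA _ _ _ s hm hmu; rewrite -Hrho_factor.
apply: cvg_trans (near_eq_cvg (Gepsrho_resolvent_near B C1 C2 hA hm hmu)) _.
apply: cvg_mulmx; last exact: cvg_cst.
apply: cvg_mulmx; first exact: cvg_cst.
exact: cvg_at_right_filter (cvg_resolvent hA).
Qed.
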